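(* For $m=2,4,6$ let $\mathbb Z_m\subset SL_2(\mathbb Z)$ be the cyclic subgroup generated respectively by $\begin{pmatrix}-1&0\\0&-1\end{pmatrix}$, $\begin{pmatrix}0&-1\\1&0\end{pmatrix}$, $\begin{pmatrix}0&1\\-1&1\end{pmatrix}$, and let $G_m=\mathbb Z_m\ltimes\mathbb Z^2\subset\Gamma^J$ be the subgroup of pairs $(M,X)$ with $M\in\mathbb Z_m$, $X\in\mathbb Z^2$. Then $G_2\subset G_4$ and $G_2\subset G_6$, and the Jacobi group $\Gamma^J$ is isomorphic to the amalgamated free product $G_4 *_{G_2} G_6$.
   Context: The full Jacobi group is $\Gamma^J=SL_2(\mathbb Z)\ltimes\mathbb Z^2$, the set of pairs $(M,X)$ with $M\in SL_2(\mathbb Z)$, $X\in\mathbb Z^2$ a row vector, with multiplication $(M,X)(M',X')=(MM',XM'+X')$. *)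

From HB Require Import structures.
From mathcomp Require Import all_boot all_order all_algebra.
Set Implicit Arguments. Unset Strict Implicit. Unset Printing Implicit Defensive.
Import Order.TTheory GRing.Theory Num.Theory.
Local Open Scope ring_scope.

Record grp := Grp {
  gcar :> Type;
  gmul : gcar -> gcar -> gcar;
  gone : gcar;
  ginv : gcar -> gcar;
  gmulA : forall x y z, gmul x (gmul y z) = gmul (gmul x y) z;
  gmul1 : forall x, gmul x gone = x;
  g1mul : forall x, gmul gone x = x;
  gmulV : forall x, gmul x (ginv x) = gone;
  gVmul : forall x, gmul (ginv x) x = gone
}.

Record jac := Jac { jM : 'M[int]_2; jX : 'rV[int]_2; jdet : \det jM == 1 }.

Lemma jmul_det (a b : jac) : \det (jM a *m jM b) == 1.
Proof. by rewrite det_mulmx (eqP (jdet a)) (eqP (jdet b)) mulr1. Qed.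

Definition jmul (a b : jac) : jac :=
  @Jac (jM a *m jM b) (jX a *m jM b + jX b) (jmul_det a b).

Definition mx2 (a b c d : int) : 'M[int]_2 :=
  \matrix_(i < 2, j < 2)
    if i == ord0 then (if j == ord0 then a else b) else (if j == ord0 then c else d).

Definition gen2 : 'M[int]_2 := mx2 (-1) 0 0 (-1).
Definition gen4 : 'M[int]_2 := mx2 0 (-1) 1 0.
Definition gen6 : 'M[int]_2 := mx2 0 1 (-1) 1.

(* the cyclic subgroup of SL_2(Z) generated by g (g has finite order here,
   so nonnegative powers suffice) *)
Definition cyc (g : 'M[int]_2) (M : 'M[int]_2) : Prop := exists k : nat, M = g ^+ k.

Definition Gm (g : 'M[int]_2) (x : jac) : Prop := cyc g (jM x).
Definition G2 := Gm gen2.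
Definition G4 := Gm gen4.
Definition G6 := Gm gen6.

Definition homOnJ (A : jac -> Prop) (H : grp) (f : jac -> H) : Prop :=
  forall x y, A x -> A y -> f (jmul x y) = gmul (f x) (f y).

Definition homOnJJ (A : jac -> Prop) (f : jac -> jac) : Prop :=
  forall x y, A x -> A y -> f (jmul x y) = jmul (f x) (f y).

(* Gamma^J (with j4 : G4 -> Gamma^J, j6 : G6 -> Gamma^J agreeing on G2) is the
   amalgamated free product G4 *_{G2} G6, i.e. the pushout of
   G4 <- G2 -> G6 (inclusions) in the category of groups. *)
Definition is_amalgam (j4 j6 : jac -> jac) : Prop :=
  homOnJJ G4 j4 /\ homOnJJ G6 j6 /\ (forall x, G2 x -> j4 x = j6 x) /\
  forall (H : grp) (f4 f6 : jac -> H),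
    homOnJ G4 f4 -> homOnJ G6 f6 -> (forall x, G2 x -> f4 x = f6 x) ->
    (exists F : jac -> H, homOnJ (fun _ => True) F /\
        (forall x, G4 x -> F (j4 x) = f4 x) /\ (forall x, G6 x -> F (j6 x) = f6 x)) /\
    (forall F F' : jac -> H,
        homOnJ (fun _ => True) F ->
        (forall x, G4 x -> F (j4 x) = f4 x) -> (forall x, G6 x -> F (j6 x) = f6 x) ->
        homOnJ (fun _ => True) F' ->
        (forall x, G4 x -> F' (j4 x) = f4 x) -> (forall x, G6 x -> F' (j6 x) = f6 x) ->
        forall z, F z = F' z).

From mathcomp Require Import all_boot all_order all_algebra.
From mathcomp Require Import zify ring.
From Stdlib Require Import ClassicalEpsilon.
Set Implicit Arguments. Unset Strict Implicit. Unset Printing Implicit Defensive.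
Import Order.TTheory GRing.Theory Num.Theory.
Local Open Scope ring_scope.

(* SL_2(Z) is the amalgam Z_4 *_{Z_2} Z_6 of the cyclic groups generated by
   gen4 and gen6 (van der Waerden's argument): Euclid's algorithm shows that
   gen4 and gen6 generate SL_2(Z); every element has a unique normal form
   gen2^e gen4^a W gen6^b, with W a word in the matrices gen6 gen4 and
   gen6^2 gen4, unique because such a word is determined by its (nonnegative)
   matrix; and left multiplication by gen4 and gen6 acts on normal forms.
   Evaluating normal forms in a group H at elements s, p with s^2 = p^3 and
   s^4 = 1 therefore gives a homomorphism SL_2(Z) -> H extending gen4 |-> s,
   gen6 |-> p.  Since the translations Z^2 lie in G_2, homomorphisms f4, f6 on
   G_4, G_6 agreeing on G_2 restrict to a common homomorphism tau on Z^2, and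
   (M, X) |-> phi(M) tau(X) is the required extension to Gamma^J; it is unique
   because Gamma^J is generated by G_4 and G_6. *)

Lemma ord2P (i : 'I_2) : i = ord0 \/ i = ord_max.
Proof. by case: i => [[|[|//]]] ?; [left | right]; apply/val_inj. Qed.

Lemma mx2_eq (A B : 'M[int]_2) :
  A ord0 ord0 = B ord0 ord0 -> A ord0 ord_max = B ord0 ord_max ->
  A ord_max ord0 = B ord_max ord0 -> A ord_max ord_max = B ord_max ord_max ->
  A = B.
Proof.
move=> e00 e01 e10 e11; apply/matrixP => i j.
by case: (ord2P i) => ->; case: (ord2P j) => ->.
Qed.

Variant mx2_spec (A : 'M[int]_2) : Prop := Mx2Spec a b c d of A = mx2 a b c d.

Lemma mx2P (A : 'M[int]_2) : mx2_spec A.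
Proof.
by exists (A ord0 ord0) (A ord0 ord_max) (A ord_max ord0) (A ord_max ord_max);
  apply: mx2_eq; rewrite !mxE.
Qed.

Lemma mx2_inj a b c d a' b' c' d' :
  mx2 a b c d = mx2 a' b' c' d' -> [/\ a = a', b = b', c = c' & d = d'].
Proof.
move/matrixP => e.
by split; [move: (e ord0 ord0) | move: (e ord0 ord_max)
          | move: (e ord_max ord0) | move: (e ord_max ord_max)]; rewrite !mxE.
Qed.

Lemma mx2_1 : 1%:M = mx2 1 0 0 1.
Proof. by apply: mx2_eq; rewrite !mxE. Qed.

Lemma mul_mx2 a b c d a' b' c' d' :
  mx2 a b c d *m mx2 a' b' c' d' =
  mx2 (a * a' + b * c') (a * b' + b * d') (c * a' + d * c') (c * b' + d * d').
Proof. by apply: mx2_eq; rewrite !mxE !big_ord_recl big_ord0 !mxE addr0. Qed.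

Lemma det_mx2 a b c d : \det (mx2 a b c d) = a * d - b * c.
Proof.
rewrite (expand_det_row _ ord0) !big_ord_recl big_ord0 /cofactor !det_mx11 !mxE /=.
rewrite expr0 expr1; ring.
Qed.

(** * Generation of SL_2(Z) by gen4 and gen6 *)

Inductive gen46 : 'M[int]_2 -> Prop :=
  | gen46_1 : gen46 1%:M
  | gen46_S M : gen46 M -> gen46 (gen4 *m M)
  | gen46_R M : gen46 M -> gen46 (gen6 *m M).

Lemma gen46_gen4 : gen46 gen4.
Proof. by rewrite -[gen4]mulmx1; apply: gen46_S gen46_1. Qed.

Lemma gen46_gen6 : gen46 gen6.
Proof. by rewrite -[gen6]mulmx1; apply: gen46_R gen46_1. Qed.

Lemma gen46_mul A B : gen46 A -> gen46 B -> gen46 (A *m B).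
Proof.
move=> gA gB; elim: gA => [|M _ IH|M _ IH]; rewrite ?mul1mx -?mulmxA.
- exact: gB.
- exact: gen46_S.
- exact: gen46_R.
Qed.

Lemma gen46_expr g k : gen46 g -> gen46 (g ^+ k).
Proof.
move=> gg; elim: k => [|k IH]; first exact: gen46_1.
by rewrite exprS -mulmxE; apply: gen46_mul.
Qed.

Lemma det_gen46 M : gen46 M -> \det M = 1.
Proof.
by elim=> [|{}M _ IH|{}M _ IH]; rewrite ?det1 // det_mulmx IH det_mx2.
Qed.

Lemma gen46_S_inv M : gen46 (gen4 *m M) -> gen46 M.
Proof.
move=> /gen46_S/gen46_S/gen46_S; congr gen46.
by rewrite !mulmxA /gen4 !mul_mx2 -[M in RHS]mul1mx mx2_1; congr (mx2 _ _ _ _ *m M).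
Qed.

Lemma gen46_shear1 M : gen46 M -> gen46 (mx2 1 1 0 1 *m M).
Proof.
move=> /gen46_S/gen46_R/gen46_R; congr gen46.
by rewrite !mulmxA /gen4 /gen6 !mul_mx2; congr (mx2 _ _ _ _ *m M).
Qed.

Lemma gen46_shearN1 M : gen46 M -> gen46 (mx2 1 (-1) 0 1 *m M).
Proof.
move=> /gen46_R/gen46_S; congr gen46.
by rewrite !mulmxA /gen4 /gen6 !mul_mx2; congr (mx2 _ _ _ _ *m M).
Qed.

Lemma gen46_shear (k : int) M : gen46 M -> gen46 (mx2 1 k 0 1 *m M).
Proof.
have shear_succ (l : int) : mx2 1 (1 + l) 0 1 = mx2 1 1 0 1 *m mx2 1 l 0 1.
  by rewrite mul_mx2; congr mx2; ring.
have shear_pred (l : int) : mx2 1 (- (1 + l)) 0 1 = mx2 1 (-1) 0 1 *m mx2 1 (- l) 0 1.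
  by rewrite mul_mx2; congr mx2; ring.
move=> gM; suff [] : gen46 (mx2 1 (`|k|%N : int) 0 1 *m M) /\
                    gen46 (mx2 1 (- (`|k|%N : int)) 0 1 *m M).
  by case: (ltP k 0) => hk; [rewrite ltz0_abs // opprK => _ | rewrite gez0_abs].
elim: `|k|%N => [|n [IHp IHn]].
  by rewrite oppr0 (_ : mx2 1 0 0 1 = 1%:M) ?mul1mx // mx2_1.
rewrite intS shear_succ shear_pred -!mulmxA.
by split; [apply: gen46_shear1 | apply: gen46_shearN1].
Qed.

Lemma gen46_mx2 a b c d : a * d - b * c = 1 -> gen46 (mx2 a b c d).
Proof.
have [n] := ubnP `|c|%N; elim: n => // n IH in a b c d *; rewrite ltnS => hc hdet.
have [c0|c_neq0] := eqVneq c 0.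
  move: hdet; rewrite c0 mulr0 subr0 => had.
  have : a \is a GRing.unit by apply/unitrPr; exists d.
  rewrite qualifE /= => /orP[] /eqP ea; move: had; rewrite ea => hd.
    move: (gen46_shear b gen46_1); rewrite mx2_1 mul_mx2.
    by congr (gen46 (mx2 _ _ _ _)); lia.
  move: (gen46_shear (- b) (gen46_S (gen46_S gen46_1))); rewrite mx2_1 /gen4 !mul_mx2.
  by congr (gen46 (mx2 _ _ _ _)); lia.
set q := (a %/ c)%Z; set r := (a %% c)%Z.
have ea : a = q * c + r by apply: divz_eq.
have r_ge0 : 0 <= r by apply: modz_ge0.
have r_lt : r < `|c| by apply: ltz_mod.
have : gen46 (mx2 (- c) (- d) r (b - q * d)).
  by apply: IH; [lia | rewrite -hdet ea; ring].
have -> : mx2 (- c) (- d) r (b - q * d) = gen4 *m mx2 r (b - q * d) c d.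
  by rewrite /gen4 mul_mx2; congr mx2; ring.
move=> /gen46_S_inv/(gen46_shear q); rewrite mul_mx2.
by congr (gen46 (mx2 _ _ _ _)); rewrite ?ea; ring.
Qed.

Lemma det1_gen46 M : \det M = 1 -> gen46 M.
Proof. by case: (mx2P M) => a b c d ->; rewrite det_mx2; apply: gen46_mx2. Qed.

(** * Normal forms in SL_2(Z) *)

(* [mxL = gen6 * gen4] and [mxT = gen6 ^+ 2 * gen4]. *)
Definition mxL : 'M[int]_2 := mx2 1 0 1 1.
Definition mxT : 'M[int]_2 := mx2 1 1 0 1.

Inductive rot3 := Rot0 | Rot1 | Rot2.

Record nf := NF { nf_neg : bool; nf_S : bool; nf_word : seq bool; nf_rot : rot3 }.

Definition word_mx (w : seq bool) : 'M[int]_2 :=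
  foldr (fun l W => (if l then mxL else mxT) *m W) 1%:M w.

Lemma word_mx_nil : word_mx [::] = 1%:M. Proof. by []. Qed.

Lemma word_mx_cons l w : word_mx (l :: w) = (if l then mxL else mxT) *m word_mx w.
Proof. by []. Qed.

Arguments word_mx : simpl never.

Definition rot_mx (r : rot3) : 'M[int]_2 :=
  match r with Rot0 => 1%:M | Rot1 => gen6 | Rot2 => gen6 *m gen6 end.

Definition nf_mx (u : nf) : 'M[int]_2 :=
  (if nf_neg u then gen2 else 1%:M) *m ((if nf_S u then gen4 else 1%:M) *m
    (word_mx (nf_word u) *m rot_mx (nf_rot u))).

Definition nf1 := NF false false [::] Rot0.

Definition nf_actS (u : nf) : nf :=
  let: NF e a w r := u in if a then NF (~~ e) false w r else NF e true w r.

Definition nf_actR (u : nf) : nf :=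
  let: NF e a w r := u in
  if a then NF e false (true :: w) r else
  match w with
  | true :: w' => NF e false (false :: w') r
  | false :: w' => NF (~~ e) true w' r
  | [::] => match r with
            | Rot0 => NF e false [::] Rot1
            | Rot1 => NF e false [::] Rot2
            | Rot2 => NF (~~ e) false [::] Rot0
            end
  end.

Ltac mx2_ring :=
  rewrite /nf_mx /= ?word_mx_cons ?word_mx_nil /gen2 /gen4 /gen6 /mxL /mxT ?mx2_1 ?mul_mx2;
  congr mx2; ring.

Lemma nf_mx1 : nf_mx nf1 = 1%:M.
Proof. by rewrite /nf_mx /= !mul1mx. Qed.

Lemma nf_mx_actS u : nf_mx (nf_actS u) = gen4 *m nf_mx u.
Proof.
case: u => e a w r; case: (mx2P (word_mx w)) => x y z t eW.
by case: e; case: a; case: r; rewrite /nf_mx /= eW; mx2_ring.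
Qed.

Lemma nf_mx_actR u : nf_mx (nf_actR u) = gen6 *m nf_mx u.
Proof.
case: u => e a [|l w] r; first by case: a; case: e; case: r; mx2_ring.
case: (mx2P (word_mx w)) => x y z t eW.
by case: a; case: l; case: e; case: r; rewrite /nf_mx /= ?word_mx_cons eW; mx2_ring.
Qed.

Lemma nf_exists M : gen46 M -> exists u, nf_mx u = M.
Proof.
elim=> [|{}M _ [u <-]|{}M _ [u <-]]; first by exists nf1; apply: nf_mx1.
- by exists (nf_actS u); apply: nf_mx_actS.
- by exists (nf_actR u); apply: nf_mx_actR.
Qed.

Variant pos_mx2_spec (A : 'M[int]_2) : Prop :=
  PosMx2 a b c d of A = mx2 a b c d & 1 <= a & 0 <= b & 0 <= c & 1 <= d.

Lemma word_mxP w : pos_mx2_spec (word_mx w).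
Proof.
elim: w => [|l w [a b c d eW ha hb hc hd]].
  by rewrite word_mx_nil mx2_1; apply: (PosMx2 erefl).
by rewrite word_mx_cons eW; case: l; rewrite /mxL /mxT mul_mx2; apply: (PosMx2 erefl); lia.
Qed.

Lemma word_mx_inj w w' : word_mx w = word_mx w' -> w = w'.
Proof.
elim: w w' => [|l w IH] [|l' w'] //; rewrite ?word_mx_nil ?word_mx_cons ?mx2_1.
- by case: (word_mxP w') => a b c d -> ? ? ? ?; case: l'; rewrite mul_mx2 => /mx2_inj[]; lia.
- by case: (word_mxP w) => a b c d -> ? ? ? ?; case: l; rewrite mul_mx2 => /mx2_inj[]; lia.
case: (word_mxP w) => a b c d eW ? ? ? ?; case: (word_mxP w') => a' b' c' d' eW' ? ? ? ?.
rewrite eW eW'; case: l; case: l'; rewrite !mul_mx2 => /mx2_inj[] ? ? ? ?; try lia.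
all: by rewrite (IH w') // eW eW'; congr mx2; lia.
Qed.

(* [word_mx w] is nonnegative, so [gen2^e * gen4^a * word_mx w] has no row of
   strictly opposite signs, while multiplying it on the right by gen6 or
   gen6^2 creates one: this recovers [nf_rot] from [nf_mx]. *)
Definition opposite_signs (x y : int) := (x < 0 < y) || (y < 0 < x).

Definition has_opposite_row (A : 'M[int]_2) :=
  opposite_signs (A ord0 ord0) (A ord0 ord_max) ||
  opposite_signs (A ord_max ord0) (A ord_max ord_max).

Lemma has_opposite_row_nf_mx u :
  has_opposite_row (nf_mx u) = if nf_rot u is Rot0 then false else true.
Proof.
case: u => e a w r; case: (word_mxP w) => x y z t eW ? ? ? ?.
by case: e; case: a; case: r;
  rewrite /nf_mx /= eW /gen2 /gen4 /gen6 ?mx2_1 !mul_mx2 /has_opposite_row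
          /opposite_signs !mxE /=; lia.
Qed.

Definition rot_succ (r : rot3) : rot3 :=
  match r with Rot0 => Rot1 | Rot1 => Rot2 | Rot2 => Rot0 end.

Lemma nf_mx_mul_gen6 e a w r :
  nf_mx (NF e a w r) *m gen6 =
  nf_mx (NF (if r is Rot2 then ~~ e else e) a w (rot_succ r)).
Proof.
case: (mx2P (word_mx w)) => x y z t eW.
by case: e; case: a; case: r; rewrite /nf_mx /= eW; mx2_ring.
Qed.

Lemma nf_rot_inj u v : nf_mx u = nf_mx v -> nf_rot u = nf_rot v.
Proof.
case: u v => e a w r [e' a' w' r'] E.
have E6 := congr1 (mulmx^~ gen6) E; rewrite !nf_mx_mul_gen6 in E6.
move: (congr1 has_opposite_row E) (congr1 has_opposite_row E6).
by rewrite !has_opposite_row_nf_mx /=; case: r {E E6}; case: r'.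
Qed.

Lemma nf_mx_inj u v : nf_mx u = nf_mx v -> u = v.
Proof.
move=> E; have := nf_rot_inj E.
case: u v E => e a w r [e' a' w' r'] /= E er; subst r'.
suff [-> -> /word_mx_inj ->] : [/\ e = e', a = a' & word_mx w = word_mx w'] by [].
move: E; rewrite /nf_mx /=.
case: (word_mxP w) => x y z t -> ? ? ? ?; case: (word_mxP w') => x' y' z' t' -> ? ? ? ?.
case: e; case: a; case: e'; case: a'; case: r;
  rewrite /= /gen2 /gen4 /gen6 ?mx2_1 !mul_mx2 => /mx2_inj[] ? ? ? ?;
  first [by split=> //; congr mx2; lia | lia].
Qed.

Definition nf_of (M : 'M[int]_2) : nf :=
  epsilon (inhabits nf1) (fun u => nf_mx u = M).

Lemma nf_mxK : cancel nf_mx nf_of.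
Proof.
move=> u; apply: nf_mx_inj.
exact: (epsilon_spec (inhabits nf1) (fun v => nf_mx v = nf_mx u) (ex_intro _ u erefl)).
Qed.

(** * Lifting SL_2(Z) to a group *)

Section GroupFacts.

Variable H : grp.
Local Notation "x ** y" := (gmul x y) (at level 40, left associativity).
Local Notation one := (gone H).

Lemma gmul_idem (x : H) : x ** x = x -> x = one.
Proof.
move=> xx; have : ginv x ** (x ** x) = ginv x ** x by rewrite xx.
by rewrite gmulA gVmul g1mul.
Qed.

Lemma gmul_commute_mid (a b c d e : H) :
  b ** c = c ** d -> a ** c ** (d ** e) = a ** b ** (c ** e).
Proof. by move=> bc; rewrite -!gmulA (gmulA b) bc -!gmulA. Qed.

Definition gpow (x : H) (k : nat) : H := iter k (gmul x) one.

End GroupFacts.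

Section LiftSL2.

Variable H : grp.
Local Notation "x ** y" := (gmul x y) (at level 40, left associativity).
Local Notation one := (gone H).

Variables s p : H.
Hypothesis s2_p3 : s ** s = p ** p ** p.
Hypothesis s4_1 : s ** s ** (s ** s) = one.

Definition word_grp (w : seq bool) : H :=
  foldr (fun l g => (if l then p ** s else p ** p ** s) ** g) one w.

Definition rot_grp (r : rot3) : H :=
  match r with Rot0 => one | Rot1 => p | Rot2 => p ** p end.

Definition neg_grp (e : bool) : H := if e then s ** s else one.

Definition nf_grp (u : nf) : H :=
  neg_grp (nf_neg u) **
  ((if nf_S u then s else one) ** (word_grp (nf_word u) ** rot_grp (nf_rot u))).

Lemma neg_grp_s e : neg_grp e ** s = s ** neg_grp e.
Proof. by case: e; rewrite /= ?g1mul ?gmul1 // -!gmulA. Qed.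

Lemma neg_grp_p e : neg_grp e ** p = p ** neg_grp e.
Proof. by case: e; rewrite /= ?g1mul ?gmul1 // s2_p3 -!gmulA. Qed.

Lemma neg_grp_s2 e : neg_grp e ** (s ** s) = neg_grp (~~ e).
Proof. by case: e; rewrite /= ?g1mul. Qed.

Lemma nf_grp_actS u : nf_grp (nf_actS u) = s ** nf_grp u.
Proof.
case: u => e [] w r; rewrite /nf_grp /= ?g1mul !gmulA.
- by rewrite -neg_grp_s -(gmulA (neg_grp e)) neg_grp_s2.
- by rewrite neg_grp_s.
Qed.

Lemma nf_grp_actR u : nf_grp (nf_actR u) = p ** nf_grp u.
Proof.
case: u => e [] w r; first by rewrite /nf_grp /= ?g1mul !gmulA neg_grp_p.
case: w => [|[] w].
- case: r; rewrite /nf_grp /= ?g1mul ?gmul1 ?gmulA ?neg_grp_p //.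
  by rewrite -neg_grp_p -!gmulA (gmulA p p p) -s2_p3 neg_grp_s2.
- by rewrite /nf_grp /= ?g1mul ?gmulA -neg_grp_p.
- by rewrite /nf_grp /= ?g1mul ?gmulA -neg_grp_s2 s2_p3 !gmulA -neg_grp_p.
Qed.

Definition sl2_lift (M : 'M[int]_2) : H := nf_grp (nf_of M).

Lemma sl2_lift1 : sl2_lift 1%:M = one.
Proof. by rewrite /sl2_lift -nf_mx1 nf_mxK /nf_grp /= !g1mul. Qed.

Lemma sl2_lift_gen4_mul M : gen46 M -> sl2_lift (gen4 *m M) = s ** sl2_lift M.
Proof. by case/nf_exists=> u <-; rewrite /sl2_lift -nf_mx_actS !nf_mxK nf_grp_actS. Qed.

Lemma sl2_lift_gen6_mul M : gen46 M -> sl2_lift (gen6 *m M) = p ** sl2_lift M.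
Proof. by case/nf_exists=> u <-; rewrite /sl2_lift -nf_mx_actR !nf_mxK nf_grp_actR. Qed.

Lemma sl2_lift_mul A B : gen46 A -> gen46 B -> sl2_lift (A *m B) = sl2_lift A ** sl2_lift B.
Proof.
move=> gA gB; elim: gA => [|M gM IH|M gM IH]; first by rewrite mul1mx sl2_lift1 g1mul.
all: have gMB := gen46_mul gM gB.
- by rewrite -mulmxA !sl2_lift_gen4_mul // IH gmulA.
- by rewrite -mulmxA !sl2_lift_gen6_mul // IH gmulA.
Qed.

Lemma sl2_lift_expr g k : gen46 g -> sl2_lift (g ^+ k) = gpow (sl2_lift g) k.
Proof.
move=> gg; elim: k => [|k IH]; first exact: sl2_lift1.
by rewrite exprS -mulmxE sl2_lift_mul ?IH //; apply: gen46_expr.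
Qed.

Lemma sl2_lift_gen4 : sl2_lift gen4 = s.
Proof. by rewrite -[gen4]mulmx1 sl2_lift_gen4_mul ?sl2_lift1 ?gmul1 //; apply: gen46_1. Qed.

Lemma sl2_lift_gen6 : sl2_lift gen6 = p.
Proof. by rewrite -[gen6]mulmx1 sl2_lift_gen6_mul ?sl2_lift1 ?gmul1 //; apply: gen46_1. Qed.

End LiftSL2.

(** * The Jacobi group *)

Lemma det_expr1 (A : 'M[int]_2) k : \det A = 1 -> \det (A ^+ k) = 1.
Proof.
move=> dA; elim: k => [|k IH]; first by rewrite expr0 det1.
by rewrite exprS detM dA IH mul1r.
Qed.

Lemma det1_eq1 : \det (1%:M : 'M[int]_2) == 1.
Proof. by rewrite det1. Qed.

Lemma det_gen2 : \det gen2 == 1. Proof. by rewrite det_mx2. Qed.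
Lemma det_gen4 : \det gen4 == 1. Proof. by rewrite det_mx2. Qed.
Lemma det_gen6 : \det gen6 == 1. Proof. by rewrite det_mx2. Qed.

Lemma gen4X2 : gen4 ^+ 2 = gen2.
Proof. by rewrite expr2 -mulmxE /gen4 mul_mx2. Qed.

Lemma gen6X3 : gen6 ^+ 3 = gen2.
Proof. by rewrite !exprS expr0 -!mulmxE mulmx1 /gen6 !mul_mx2. Qed.

Lemma gen4X4 : gen4 ^+ 4 = 1%:M.
Proof. by rewrite (exprM gen4 2 2) gen4X2 expr2 -mulmxE /gen2 mul_mx2 mx2_1. Qed.

Lemma Gm_expr g k x : Gm (g ^+ k) x -> Gm g x.
Proof. by case=> j xM; exists (k * j)%N; rewrite xM exprM. Qed.

Definition jmx (M : 'M[int]_2) (hM : \det M == 1) : jac := @Jac M 0 hM.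
Definition jtr (X : 'rV[int]_2) : jac := @Jac 1%:M X det1_eq1.
Definition jlin (x : jac) : jac := jmx (jdet x).

Lemma jac_eq (x y : jac) : jM x = jM y -> jX x = jX y -> x = y.
Proof.
case: x y => M X hM [M' X' hM'] /= eM eX; subst M' X'.
by rewrite (eq_irrelevance hM hM').
Qed.

Lemma jac_split x : x = jmul (jlin x) (jtr (jX x)).
Proof. by apply: jac_eq; rewrite /= ?mulmx1 ?mul0mx ?add0r. Qed.

Lemma jtrD X Y : jtr (X + Y) = jmul (jtr X) (jtr Y).
Proof. by apply: jac_eq; rewrite /= ?mulmx1. Qed.

Lemma jmx_split M N (hM : \det M == 1) (hN : \det N == 1) x :
  jX x = 0 -> jM x = M *m N -> x = jmul (jmx hM) (jmx hN).
Proof. by move=> x0 xM; apply: jac_eq; rewrite /= ?x0 ?xM ?mul0mx ?addr0. Qed.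

Lemma jtr_jmx M (hM : \det M == 1) X :
  jmul (jtr X) (jmx hM) = jmul (jmx hM) (jtr (X *m M)).
Proof. by apply: jac_eq; rewrite /= ?mul1mx ?mulmx1 ?mul0mx ?addr0 ?add0r. Qed.

Lemma Gm_jtr g X : Gm g (jtr X).
Proof. by exists 0%N; rewrite expr0. Qed.

Lemma Gm_jmx g (hg : \det g == 1) : Gm g (jmx hg).
Proof. by exists 1%N; rewrite expr1. Qed.

Section HomOnGm.

Variables (H : grp) (g : 'M[int]_2) (hg : \det g == 1) (f : jac -> H).
Local Notation "x ** y" := (gmul x y) (at level 40, left associativity).
Hypothesis f_hom : homOnJ (Gm g) f.

Lemma hom_jtr0 : f (jtr 0) = gone H.
Proof. by apply: gmul_idem; rewrite -f_hom -?jtrD ?addr0 //; apply: Gm_jtr. Qed.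

Lemma hom_jtrD X Y : f (jtr (X + Y)) = f (jtr X) ** f (jtr Y).
Proof. by rewrite jtrD f_hom //; apply: Gm_jtr. Qed.

Lemma hom_split x : Gm g x -> f x = f (jlin x) ** f (jtr (jX x)).
Proof. by move=> gx; rewrite {1}(jac_split x) f_hom //; apply: Gm_jtr. Qed.

Lemma hom_expr k x : jX x = 0 -> jM x = g ^+ k -> f x = gpow (f (jmx hg)) k.
Proof.
elim: k x => [|k IH] x x0 xM.
  by rewrite (_ : x = jtr 0) ?hom_jtr0 //; apply: jac_eq; rewrite ?x0 ?xM.
have hk : \det (g ^+ k) == 1 by rewrite det_expr1 ?(eqP hg).
have xM' : jM x = g *m g ^+ k by rewrite xM exprS mulmxE.
rewrite (jmx_split hg hk x0 xM') f_hom ?(IH (jmx hk)) //; first exact: Gm_jmx.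
by exists k.
Qed.

Lemma hom_jtr_jmx X : f (jtr X) ** f (jmx hg) = f (jmx hg) ** f (jtr (X *m g)).
Proof. by rewrite -!f_hom ?jtr_jmx //; apply: Gm_jtr || apply: Gm_jmx. Qed.

End HomOnGm.

Lemma gen46_jM x : gen46 (jM x).
Proof. by apply: det1_gen46; apply/eqP; apply: jdet. Qed.

Lemma hom_jac_eq (H : grp) (F1 F2 : jac -> H) :
  homOnJ (fun _ => True) F1 -> homOnJ (fun _ => True) F2 ->
  (forall x, G4 x -> F1 x = F2 x) -> (forall x, G6 x -> F1 x = F2 x) ->
  forall x, F1 x = F2 x.
Proof.
move=> F1_hom F2_hom eq4 eq6.
have eq_lin M : gen46 M -> forall x, jX x = 0 -> jM x = M -> F1 x = F2 x.
  elim=> [|{}M gM IH|{}M gM IH] x x0 xM.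
  - by apply: eq4; exists 0%N; rewrite xM expr0.
  - have hM : \det M == 1 by rewrite det_gen46.
    rewrite (jmx_split det_gen4 hM x0 xM) F1_hom // F2_hom //.
    by rewrite (IH (jmx hM)) // eq4 //; apply: Gm_jmx.
  - have hM : \det M == 1 by rewrite det_gen46.
    rewrite (jmx_split det_gen6 hM x0 xM) F1_hom // F2_hom //.
    by rewrite (IH (jmx hM)) // eq6 //; apply: Gm_jmx.
move=> x; rewrite (jac_split x) F1_hom // F2_hom // (eq_lin _ (gen46_jM x) (jlin x)) //.
by rewrite eq4 //; apply: Gm_jtr.
Qed.

Section Extension.

Variable H : grp.
Local Notation "x ** y" := (gmul x y) (at level 40, left associativity).
Local Notation one := (gone H).
Variables f4 f6 : jac -> H.
Hypothesis f4_hom : homOnJ G4 f4.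
Hypothesis f6_hom : homOnJ G6 f6.
Hypothesis f46_eq : forall x, G2 x -> f4 x = f6 x.

Local Notation s := (f4 (jmx det_gen4)).
Local Notation p := (f6 (jmx det_gen6)).
Local Notation tau X := (f4 (jtr X)).

Lemma f6_jtr X : f6 (jtr X) = tau X.
Proof. by rewrite f46_eq //; apply: Gm_jtr. Qed.

Lemma s2_p3 : s ** s = p ** p ** p.
Proof.
have -> : s ** s = gpow s 2 by rewrite /= gmul1.
have -> : p ** p ** p = gpow p 3 by rewrite /= gmul1 !gmulA.
rewrite -(hom_expr det_gen4 f4_hom (x := jmx det_gen2)) ?gen4X2 //.
rewrite -(hom_expr det_gen6 f6_hom (x := jmx det_gen2)) ?gen6X3 //.
by apply: f46_eq; apply: Gm_jmx.
Qed.

Lemma s4_1 : s ** s ** (s ** s) = one.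
Proof.
have -> : s ** s ** (s ** s) = gpow s 4 by rewrite /= gmul1 !gmulA.
by rewrite -(hom_expr det_gen4 f4_hom (x := jtr 0)) ?gen4X4 // (hom_jtr0 f4_hom).
Qed.

Local Notation lift := (sl2_lift s p).

Lemma tau_lift X M : gen46 M -> tau X ** lift M = lift M ** tau (X *m M).
Proof.
move=> gM; elim: gM X => [|{}M gM IH|{}M gM IH] X.
- by rewrite sl2_lift1 mulmx1 gmul1 g1mul.
- rewrite (sl2_lift_gen4_mul p s4_1 gM) gmulA (hom_jtr_jmx det_gen4 f4_hom) -gmulA.
  by rewrite IH gmulA mulmxA.
- rewrite (sl2_lift_gen6_mul s2_p3 s4_1 gM) gmulA -f6_jtr.
  rewrite (hom_jtr_jmx det_gen6 f6_hom) f6_jtr -gmulA.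
  by rewrite IH gmulA mulmxA.
Qed.

Definition jac_ext (x : jac) : H := lift (jM x) ** tau (jX x).

Lemma jac_ext_hom : homOnJ (fun _ => True) jac_ext.
Proof.
move=> x y _ _; rewrite /jac_ext.
rewrite (sl2_lift_mul s2_p3 s4_1 (gen46_jM x) (gen46_jM y)) (hom_jtrD f4_hom).
by apply: gmul_commute_mid; apply: tau_lift; apply: gen46_jM.
Qed.

Lemma jac_ext_Gm g (hg : \det g == 1) f :
  homOnJ (Gm g) f -> gen46 g -> lift g = f (jmx hg) ->
  (forall X, f (jtr X) = tau X) -> forall x, Gm g x -> jac_ext x = f x.
Proof.
move=> f_hom gg lift_g f_tau x gx; rewrite (hom_split f_hom gx) /jac_ext f_tau.
case: gx => k xM; rewrite (hom_expr hg f_hom (x := jlin x) (k := k)) //.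
by rewrite xM (sl2_lift_expr s2_p3 s4_1) // lift_g.
Qed.

Lemma jac_ext_G4 x : G4 x -> jac_ext x = f4 x.
Proof. exact: (jac_ext_Gm f4_hom gen46_gen4 (sl2_lift_gen4 p s4_1) (fun=> erefl)). Qed.

Lemma jac_ext_G6 x : G6 x -> jac_ext x = f6 x.
Proof. exact: (jac_ext_Gm f6_hom gen46_gen6 (sl2_lift_gen6 s2_p3 s4_1) f6_jtr). Qed.

End Extension.

Theorem lemma6 :
  (forall x, G2 x -> G4 x) /\ (forall x, G2 x -> G6 x) /\
  exists j4 j6 : jac -> jac, is_amalgam j4 j6.
Proof.
split; first by move=> x; rewrite /G2 -gen4X2; apply: Gm_expr.
split; first by move=> x; rewrite /G2 -gen6X3; apply: Gm_expr.
exists id, id; do 3!split => //.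
move=> H f4 f6 f4_hom f6_hom f46_eq; split.
  exists (jac_ext f4 f6); split; first exact: jac_ext_hom.
  by split; [apply: jac_ext_G4 | apply: jac_ext_G6].
move=> F F' F_hom F4 F6 F'_hom F'4 F'6.
apply: hom_jac_eq F_hom F'_hom _ _ => x gx.
- by rewrite (F4 x gx) (F'4 x gx).
- by rewrite (F6 x gx) (F'6 x gx).
Qed.
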